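(* Let $\alpha\in\mathbb{C}$ with $\Re(\alpha)>-1/2$. Then for every $n\in\mathbb{N}_0$, $$(2\alpha+1)\,p_n(x;\alpha+1)=-x\,p_n''(x;\alpha)+(2x-1-2\alpha)\,p_n'(x;\alpha)+(1+2\alpha)\,p_n(x;\alpha).$$
   Context: Let $\mathcal{A}$ be the differential operator $\mathcal{A}f(x)=-x^2f''(x)-xf'(x)+x^2f(x)$ on functions of $x>0$, with iterates $\mathcal{A}^n$ ($\mathcal{A}^0$ = identity). For $\alpha\in\mathbb{C}$, $n\in\mathbb{N}_0$, $p_n(x;\alpha)=(-1)^n e^{x}x^{-\alpha}\,\mathcal{A}^n\big(e^{-x}x^{\alpha}\big)$; for $\Re(\alpha)>-1/2$ these are polynomials in $x$ of degree $n$. Primes denote derivatives in $x$. *)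

From Stdlib Require Import Reals.
Open Scope R_scope.

Record Cpx := mkC { Cre : R; Cim : R }.

Definition RtoC (r : R) : Cpx := mkC r 0.
Definition Cadd (z w : Cpx) : Cpx := mkC (Cre z + Cre w) (Cim z + Cim w).
Definition Copp (z : Cpx) : Cpx := mkC (- Cre z) (- Cim z).
Definition Cmul (z w : Cpx) : Cpx :=
  mkC (Cre z * Cre w - Cim z * Cim w) (Cre z * Cim w + Cim z * Cre w).

(** Principal power x^a for real x > 0 and complex a:
    x^a = exp(a ln x) = e^{Re a ln x} (cos(Im a ln x) + i sin(Im a ln x)). *)
Definition cpow (x : R) (a : Cpx) : Cpx :=
  mkC (exp (Cre a * ln x) * cos (Cim a * ln x))
      (exp (Cre a * ln x) * sin (Cim a * ln x)).

Definition cderiv (f f' : R -> Cpx) : Prop :=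
  forall x, 0 < x ->
    derivable_pt_lim (fun t => Cre (f t)) x (Cre (f' x)) /\
    derivable_pt_lim (fun t => Cim (f t)) x (Cim (f' x)).

(** [Aiter n f h] : h = A^n f on (0,+oo), where
    A g (x) = - x^2 g''(x) - x g'(x) + x^2 g(x). *)
Inductive Aiter : nat -> (R -> Cpx) -> (R -> Cpx) -> Prop :=
| Aiter_0 : forall f, Aiter 0 f f
| Aiter_S : forall n f g g1 g2 h,
    Aiter n f g -> cderiv g g1 -> cderiv g1 g2 ->
    (forall x, 0 < x ->
       h x = Cadd (Cadd (Cmul (RtoC (- (x ^ 2))) (g2 x))
                        (Cmul (RtoC (- x)) (g1 x)))
                  (Cmul (RtoC (x ^ 2)) (g x))) ->
    Aiter (S n) f h.

Definition phi (a : Cpx) : R -> Cpx := fun x => Cmul (RtoC (exp (- x))) (cpow x a).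

Definition is_pn (a : Cpx) (n : nat) (P : R -> Cpx) : Prop :=
  exists h, Aiter n (phi a) h /\
    forall x, 0 < x ->
      P x = Cmul (RtoC ((-1) ^ n * exp x)) (Cmul (cpow x (Copp a)) (h x)).

(* Conjugating by the weight phi_a(x) = e^{-x} x^a turns A into a second-order
   operator on polynomials: A (phi_a q) = - phi_a (Top a q), with
   Top a q = x^2 q'' + ((2a+1) x - 2x^2) q' + (a^2 - (2a+1) x) q.  Hence
   p_n(.; a) = (Top a)^n 1.  The right-hand side of the identity is Rop a p_n(.; a)
   with Rop a q = - x q'' + (2x - 1 - 2a) q' + (1 + 2a) q, and a direct computation
   gives the intertwining relation Top (a+1) (Rop a q) = Rop a (Top a q).  Since
   Rop a 1 = 2a + 1, induction on n yields (2a+1) p_n(.; a+1) = Rop a p_n(.; a). *)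

From Stdlib Require Import Reals Lra List.
Import ListNotations.
Open Scope R_scope.

Lemma Cpx_ext z w : Cre z = Cre w -> Cim z = Cim w -> z = w.
Proof. destruct z, w; simpl; intros; subst; reflexivity. Qed.

Definition Csub z w := Cadd z (Copp w).

Lemma Cpx_ring : ring_theory (RtoC 0) (RtoC 1) Cadd Cmul Csub Copp (@eq Cpx).
Proof.
  constructor; intros; repeat match goal with z : Cpx |- _ => destruct z end;
  unfold Csub, Cadd, Cmul, Copp, RtoC; simpl; f_equal; ring.
Qed.
Add Ring Cpx_ring : Cpx_ring.

Lemma RtoC_mult r s : RtoC (r * s) = Cmul (RtoC r) (RtoC s).
Proof. apply Cpx_ext; simpl; ring. Qed.

Lemma RtoC_two : RtoC 2 = Cadd (RtoC 1) (RtoC 1).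
Proof. apply Cpx_ext; simpl; ring. Qed.

Lemma derivable_pt_lim_eq f x l l' :
  derivable_pt_lim f x l -> l = l' -> derivable_pt_lim f x l'.
Proof. intros H <-; exact H. Qed.

Definition cderiv_pt_lim (f : R -> Cpx) x l :=
  derivable_pt_lim (fun t => Cre (f t)) x (Cre l) /\
  derivable_pt_lim (fun t => Cim (f t)) x (Cim l).

Lemma cderiv_pt_lim_unique f x l1 l2 :
  cderiv_pt_lim f x l1 -> cderiv_pt_lim f x l2 -> l1 = l2.
Proof. intros [A B] [C D]; apply Cpx_ext; eapply uniqueness_limite; eauto. Qed.

Lemma cderiv_pt_lim_eq f x l l' : cderiv_pt_lim f x l -> l = l' -> cderiv_pt_lim f x l'.
Proof. intros H <-; exact H. Qed.

Lemma cderiv_pt_lim_ext f g x l :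
  (forall t, f t = g t) -> cderiv_pt_lim f x l -> cderiv_pt_lim g x l.
Proof.
  intros E [A B]; split.
  - apply (derivable_pt_lim_ext (fun t => Cre (f t))); [intros t; rewrite E |]; auto.
  - apply (derivable_pt_lim_ext (fun t => Cim (f t))); [intros t; rewrite E |]; auto.
Qed.

Lemma cderiv_pt_lim_ext_pos f g x l : 0 < x ->
  (forall t, 0 < t -> f t = g t) -> cderiv_pt_lim f x l -> cderiv_pt_lim g x l.
Proof.
  intros Hx E [A B].
  split.
  - apply (derivable_pt_lim_locally_ext (fun t => Cre (f t)) _ x 0 (x + 1));
      [lra | intros t Ht; rewrite E by lra |]; auto.
  - apply (derivable_pt_lim_locally_ext (fun t => Cim (f t)) _ x 0 (x + 1));
      [lra | intros t Ht; rewrite E by lra |]; auto.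
Qed.

Lemma cderiv_pt_lim_const c x : cderiv_pt_lim (fun _ => c) x (RtoC 0).
Proof. split; apply derivable_pt_lim_const. Qed.

Lemma cderiv_pt_lim_id x : cderiv_pt_lim (fun t => RtoC t) x (RtoC 1).
Proof. split; [apply derivable_pt_lim_id | apply derivable_pt_lim_const]. Qed.

Lemma cderiv_pt_lim_add f g x l1 l2 :
  cderiv_pt_lim f x l1 -> cderiv_pt_lim g x l2 ->
  cderiv_pt_lim (fun t => Cadd (f t) (g t)) x (Cadd l1 l2).
Proof. intros [A B] [C D]; split; apply derivable_pt_lim_plus; assumption. Qed.

Lemma cderiv_pt_lim_mul f g x l1 l2 :
  cderiv_pt_lim f x l1 -> cderiv_pt_lim g x l2 ->
  cderiv_pt_lim (fun t => Cmul (f t) (g t)) x (Cadd (Cmul l1 (g x)) (Cmul (f x) l2)).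
Proof.
  intros [A B] [C D]; split; simpl.
  - eapply derivable_pt_lim_eq.
    + apply derivable_pt_lim_minus; apply derivable_pt_lim_mult; eassumption.
    + cbv beta; ring.
  - eapply derivable_pt_lim_eq.
    + apply derivable_pt_lim_plus; apply derivable_pt_lim_mult; eassumption.
    + cbv beta; ring.
Qed.

(* Polynomials with complex coefficients, as coefficient lists in increasing degree. *)
Fixpoint peval (p : list Cpx) (x : R) : Cpx :=
  match p with [] => RtoC 0 | c :: p' => Cadd c (Cmul (RtoC x) (peval p' x)) end.

Fixpoint padd (p q : list Cpx) : list Cpx :=
  match p, q with
  | [], _ => q
  | _, [] => p
  | a :: p', b :: q' => Cadd a b :: padd p' q'
  end.

Definition pscale c (p : list Cpx) := map (Cmul c) p.

Definition pmulX (p : list Cpx) := RtoC 0 :: p.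

Fixpoint pderiv (p : list Cpx) : list Cpx :=
  match p with [] => [] | _ :: p' => padd p' (pmulX (pderiv p')) end.

Lemma peval_padd p q x : peval (padd p q) x = Cadd (peval p x) (peval q x).
Proof.
  revert q; induction p as [|a p IH]; intros [|b q]; simpl; try ring.
  rewrite IH; ring.
Qed.

Lemma peval_pscale c p x : peval (pscale c p) x = Cmul c (peval p x).
Proof. induction p as [|a p IH]; simpl; [|rewrite IH]; ring. Qed.

Lemma peval_pmulX p x : peval (pmulX p) x = Cmul (RtoC x) (peval p x).
Proof. simpl; ring. Qed.

Lemma cderiv_pt_lim_peval p x : cderiv_pt_lim (peval p) x (peval (pderiv p) x).
Proof.
  induction p as [|a p IH].
  - apply cderiv_pt_lim_const.
  - change (cderiv_pt_lim (fun t => Cadd a (Cmul (RtoC t) (peval p t))) x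
      (peval (pderiv (a :: p)) x)).
    eapply cderiv_pt_lim_eq.
    + apply cderiv_pt_lim_add; [apply cderiv_pt_lim_const |].
      apply cderiv_pt_lim_mul; [apply cderiv_pt_lim_id | exact IH].
    + simpl pderiv; rewrite peval_padd, peval_pmulX; ring.
Qed.

(* [pderiv] is only compatible with [peval] up to the trailing zeros of a list,
   so its linearity is read off from uniqueness of derivatives. *)
Lemma peval_pderiv_ext p q x :
  (forall t, peval p t = peval q t) -> peval (pderiv p) x = peval (pderiv q) x.
Proof.
  intros E; eapply cderiv_pt_lim_unique; [apply cderiv_pt_lim_peval |].
  eapply cderiv_pt_lim_ext; [| apply cderiv_pt_lim_peval]; intros t; rewrite E; reflexivity.
Qed.

Lemma peval_pderiv_padd p q x :
  peval (pderiv (padd p q)) x = Cadd (peval (pderiv p) x) (peval (pderiv q) x).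
Proof.
  eapply cderiv_pt_lim_unique; [apply cderiv_pt_lim_peval |].
  eapply cderiv_pt_lim_ext; [| apply cderiv_pt_lim_add; apply cderiv_pt_lim_peval].
  intros t; rewrite peval_padd; reflexivity.
Qed.

Lemma peval_pderiv_pscale c p x : peval (pderiv (pscale c p)) x = Cmul c (peval (pderiv p) x).
Proof.
  eapply cderiv_pt_lim_unique; [apply cderiv_pt_lim_peval |].
  eapply cderiv_pt_lim_eq.
  - eapply cderiv_pt_lim_ext; [| apply cderiv_pt_lim_mul;
      [apply (cderiv_pt_lim_const c) | apply cderiv_pt_lim_peval]].
    intros t; rewrite peval_pscale; reflexivity.
  - cbv beta; ring.
Qed.

Lemma peval_pderiv_pmulX p x :
  peval (pderiv (pmulX p)) x = Cadd (peval p x) (Cmul (RtoC x) (peval (pderiv p) x)).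
Proof. simpl pderiv; rewrite peval_padd, peval_pmulX; reflexivity. Qed.

Lemma peval_pderiv2_padd p q x :
  peval (pderiv (pderiv (padd p q))) x =
  Cadd (peval (pderiv (pderiv p)) x) (peval (pderiv (pderiv q)) x).
Proof.
  rewrite (peval_pderiv_ext _ (padd (pderiv p) (pderiv q))); [apply peval_pderiv_padd |].
  intros t; rewrite peval_pderiv_padd, peval_padd; reflexivity.
Qed.

Lemma peval_pderiv2_pscale c p x :
  peval (pderiv (pderiv (pscale c p))) x = Cmul c (peval (pderiv (pderiv p)) x).
Proof.
  rewrite (peval_pderiv_ext _ (pscale c (pderiv p))); [apply peval_pderiv_pscale |].
  intros t; rewrite peval_pderiv_pscale, peval_pscale; reflexivity.
Qed.

Lemma peval_pderiv2_pmulX p x :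
  peval (pderiv (pderiv (pmulX p))) x =
  Cadd (Cmul (RtoC 2) (peval (pderiv p) x)) (Cmul (RtoC x) (peval (pderiv (pderiv p)) x)).
Proof.
  simpl pderiv at 2; rewrite peval_pderiv_padd, peval_pderiv_pmulX, RtoC_two; ring.
Qed.

Ltac peval_simpl :=
  repeat rewrite ?peval_pderiv2_padd, ?peval_pderiv2_pscale, ?peval_pderiv2_pmulX,
    ?peval_pderiv_padd, ?peval_pderiv_pscale, ?peval_pderiv_pmulX,
    ?peval_padd, ?peval_pscale, ?peval_pmulX.

Definition Top b p :=
  padd (pmulX (pmulX (pderiv (pderiv p))))
   (padd (pscale (Cadd (Cmul (RtoC 2) b) (RtoC 1)) (pmulX (pderiv p)))
    (padd (pscale (Copp (RtoC 2)) (pmulX (pmulX (pderiv p))))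
     (padd (pscale (Copp (Cadd (Cmul (RtoC 2) b) (RtoC 1))) (pmulX p))
      (pscale (Cmul b b) p)))).

Definition Rop b q :=
  padd (pscale (Copp (RtoC 1)) (pmulX (pderiv (pderiv q))))
   (padd (pscale (RtoC 2) (pmulX (pderiv q)))
    (padd (pscale (Copp (Cadd (Cmul (RtoC 2) b) (RtoC 1))) (pderiv q))
     (pscale (Cadd (Cmul (RtoC 2) b) (RtoC 1)) q))).

Lemma Top_Rop b q x :
  peval (Top (Cadd b (RtoC 1)) (Rop b q)) x = peval (Rop b (Top b q)) x.
Proof. unfold Top, Rop; peval_simpl; rewrite RtoC_two; ring. Qed.

Lemma Top_pscale b c p x : peval (Top b (pscale c p)) x = Cmul c (peval (Top b p) x).
Proof. unfold Top; peval_simpl; ring. Qed.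

Lemma Top_ext b p q x :
  (forall t, peval p t = peval q t) -> peval (Top b p) x = peval (Top b q) x.
Proof.
  intros E; unfold Top; peval_simpl.
  rewrite (E x), (peval_pderiv_ext p q x E),
    (peval_pderiv_ext (pderiv p) (pderiv q) x (fun t => peval_pderiv_ext p q t E)).
  reflexivity.
Qed.

Fixpoint pn b n := match n with O => [RtoC 1] | S m => Top b (pn b m) end.

Lemma Rop_pn a n x :
  Cmul (Cadd (Cmul (RtoC 2) a) (RtoC 1)) (peval (pn (Cadd a (RtoC 1)) n) x) =
  peval (Rop a (pn a n)) x.
Proof.
  revert x; induction n as [|n IH]; intros x.
  - unfold Rop; simpl pn; peval_simpl; simpl; ring.
  - simpl pn; rewrite <- Top_pscale, <- Top_Rop.
    apply Top_ext; intros t; rewrite peval_pscale; apply IH.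
Qed.

Lemma cderiv_pt_lim_cpow a x : 0 < x ->
  cderiv_pt_lim (fun t => cpow t a) x (Cmul (mkC (Cre a / x) (Cim a / x)) (cpow x a)).
Proof.
  intros Hx.
  assert (Hlin : forall c, derivable_pt_lim (fun t => c * ln t) x (c / x)).
  { intros c; eapply derivable_pt_lim_eq.
    - apply derivable_pt_lim_scal, derivable_pt_lim_ln, Hx.
    - reflexivity. }
  destruct a as [ar ai]; unfold cpow; split; simpl.
  - eapply derivable_pt_lim_eq.
    + apply derivable_pt_lim_mult.
      * apply (derivable_pt_lim_comp (fun t => ar * ln t) exp);
          [apply Hlin | apply derivable_pt_lim_exp].
      * apply (derivable_pt_lim_comp (fun t => ai * ln t) cos);
          [apply Hlin | apply derivable_pt_lim_cos].
    + cbv beta; unfold Rdiv; ring.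
  - eapply derivable_pt_lim_eq.
    + apply derivable_pt_lim_mult.
      * apply (derivable_pt_lim_comp (fun t => ar * ln t) exp);
          [apply Hlin | apply derivable_pt_lim_exp].
      * apply (derivable_pt_lim_comp (fun t => ai * ln t) sin);
          [apply Hlin | apply derivable_pt_lim_sin].
    + cbv beta; unfold Rdiv; ring.
Qed.

Lemma cderiv_pt_lim_exp_opp x : cderiv_pt_lim (fun t => RtoC (exp (- t))) x (RtoC (- exp (- x))).
Proof.
  split; simpl; [| apply derivable_pt_lim_const].
  eapply derivable_pt_lim_eq.
  - apply (derivable_pt_lim_comp Ropp exp);
      [apply derivable_pt_lim_opp, derivable_pt_lim_id | apply derivable_pt_lim_exp].
  - ring.
Qed.

Definition logderiv_phi (b : Cpx) t := mkC (Cre b / t - 1) (Cim b / t).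
Definition logderiv_phi' (b : Cpx) t := mkC (- Cre b / (t * t)) (- Cim b / (t * t)).

Lemma cderiv_pt_lim_phi b x : 0 < x ->
  cderiv_pt_lim (phi b) x (Cmul (logderiv_phi b x) (phi b x)).
Proof.
  intros Hx; eapply cderiv_pt_lim_eq.
  - apply cderiv_pt_lim_mul; [apply cderiv_pt_lim_exp_opp | apply cderiv_pt_lim_cpow, Hx].
  - unfold phi; cbv beta; destruct (cpow x b) as [cr ci], b as [br bi].
    unfold logderiv_phi; apply Cpx_ext; simpl; field; lra.
Qed.

Lemma cderiv_pt_lim_logderiv_phi b x : 0 < x ->
  cderiv_pt_lim (logderiv_phi b) x (logderiv_phi' b x).
Proof.
  intros Hx; unfold logderiv_phi, logderiv_phi'; split; simpl.
  - eapply derivable_pt_lim_eq.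
    + apply derivable_pt_lim_minus; [| apply derivable_pt_lim_const].
      apply derivable_pt_lim_div;
        [apply derivable_pt_lim_const | apply derivable_pt_lim_id | lra].
    + unfold Rsqr; field; lra.
  - eapply derivable_pt_lim_eq.
    + apply derivable_pt_lim_div;
        [apply derivable_pt_lim_const | apply derivable_pt_lim_id | lra].
    + unfold Rsqr; field; lra.
Qed.

Lemma cderiv_ext_pos f g g' :
  (forall t, 0 < t -> f t = g t) -> cderiv g g' -> cderiv f g'.
Proof.
  intros E Hg x Hx; eapply cderiv_pt_lim_ext_pos; [exact Hx | | exact (Hg x Hx)].
  intros t Ht; symmetry; apply E, Ht.
Qed.

Lemma cderiv_unique_pos f g f' g' :
  (forall t, 0 < t -> f t = g t) -> cderiv f f' -> cderiv g g' ->
  forall t, 0 < t -> f' t = g' t.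
Proof.
  intros E Hf Hg t Ht; eapply cderiv_pt_lim_unique; [exact (Hf t Ht) |].
  apply (cderiv_ext_pos f g g' E Hg t Ht).
Qed.

Definition phi_poly a q t := Cmul (phi a t) (peval q t).
Definition phi_poly' a q t :=
  Cmul (phi a t) (Cadd (peval (pderiv q) t) (Cmul (logderiv_phi a t) (peval q t))).
Definition phi_poly'' a q t := Cmul (phi a t)
  (Cadd (Cmul (logderiv_phi a t)
          (Cadd (peval (pderiv q) t) (Cmul (logderiv_phi a t) (peval q t))))
        (Cadd (peval (pderiv (pderiv q)) t)
              (Cadd (Cmul (logderiv_phi' a t) (peval q t))
                    (Cmul (logderiv_phi a t) (peval (pderiv q) t))))).

Lemma cderiv_phi_poly a q : cderiv (phi_poly a q) (phi_poly' a q).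
Proof.
  intros x Hx; eapply cderiv_pt_lim_eq.
  - apply cderiv_pt_lim_mul; [apply cderiv_pt_lim_phi, Hx | apply cderiv_pt_lim_peval].
  - unfold phi_poly'; ring.
Qed.

Lemma cderiv_phi_poly' a q : cderiv (phi_poly' a q) (phi_poly'' a q).
Proof.
  intros x Hx; eapply cderiv_pt_lim_eq.
  - apply cderiv_pt_lim_mul; [apply cderiv_pt_lim_phi, Hx |].
    apply cderiv_pt_lim_add; [apply cderiv_pt_lim_peval |].
    apply cderiv_pt_lim_mul; [apply cderiv_pt_lim_logderiv_phi, Hx | apply cderiv_pt_lim_peval].
  - unfold phi_poly''; ring.
Qed.

Lemma A_phi_poly a q x : 0 < x ->
  Cadd (Cadd (Cmul (RtoC (- (x ^ 2))) (phi_poly'' a q x))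
             (Cmul (RtoC (- x)) (phi_poly' a q x)))
       (Cmul (RtoC (x ^ 2)) (phi_poly a q x)) =
  Cmul (phi a x) (Copp (peval (Top a q) x)).
Proof.
  intros Hx; unfold phi_poly, phi_poly', phi_poly'', Top; peval_simpl.
  destruct (phi a x) as [pr pi], (peval q x) as [q0r q0i],
    (peval (pderiv q) x) as [q1r q1i], (peval (pderiv (pderiv q)) x) as [q2r q2i], a as [ar ai].
  unfold logderiv_phi, logderiv_phi'; apply Cpx_ext; simpl; field; lra.
Qed.

(* [A^n (phi a) = phi a * Apn a n]. *)
Definition Apn a n := pscale (RtoC ((-1) ^ n)) (pn a n).

Lemma Top_Apn a n x : Copp (peval (Top a (Apn a n)) x) = peval (Apn a (S n)) x.
Proof.
  unfold Apn; rewrite Top_pscale, !peval_pscale; simpl pn.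
  destruct (peval (Top a (pn a n)) x); apply Cpx_ext; simpl; ring.
Qed.

Lemma Aiter_phi a n h : Aiter n (phi a) h ->
  forall x, 0 < x -> h x = phi_poly a (Apn a n) x.
Proof.
  remember (phi a) as f eqn:Ef; intros HA.
  induction HA as [f | n f g g1 g2 h HA IH Hg1 Hg2 Hh]; intros x Hx; subst f.
  - unfold phi_poly, Apn; simpl; ring.
  - assert (E1 : forall t, 0 < t -> g1 t = phi_poly' a (Apn a n) t)
      by exact (cderiv_unique_pos _ _ _ _ (IH eq_refl) Hg1 (cderiv_phi_poly a _)).
    assert (E2 : g2 x = phi_poly'' a (Apn a n) x)
      by exact (cderiv_unique_pos _ _ _ _ E1 Hg2 (cderiv_phi_poly' a _) x Hx).
    rewrite Hh, E2, E1, IH, A_phi_poly, Top_Apn by auto; reflexivity.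
Qed.

Lemma Aiter_phi_exists a n : exists h, Aiter n (phi a) h.
Proof.
  induction n as [|n [g Hg]]; [eexists; constructor |].
  eexists; apply (Aiter_S n _ g (phi_poly' a (Apn a n)) (phi_poly'' a (Apn a n))); [exact Hg | | |].
  - apply (cderiv_ext_pos _ _ _ (Aiter_phi a n g Hg)), cderiv_phi_poly.
  - apply cderiv_phi_poly'.
  - intros x Hx; reflexivity.
Qed.

Lemma cpow_opp_mul x a : Cmul (cpow x (Copp a)) (cpow x a) = RtoC 1.
Proof.
  destruct a as [ar ai]; unfold cpow, Copp; apply Cpx_ext; simpl;
  replace (- ar * ln x) with (- (ar * ln x)) by ring;
  replace (- ai * ln x) with (- (ai * ln x)) by ring;
  rewrite exp_Ropp, cos_neg, sin_neg;
  assert (He : exp (ar * ln x) <> 0) by apply Rgt_not_eq, exp_pos.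
  - rewrite <- (sin2_cos2 (ai * ln x)); unfold Rsqr; field; exact He.
  - field; exact He.
Qed.

Lemma normalize_phi_poly a n p x :
  Cmul (RtoC ((-1) ^ n * exp x))
    (Cmul (cpow x (Copp a)) (phi_poly a (pscale (RtoC ((-1) ^ n)) p) x)) = peval p x.
Proof.
  unfold phi_poly, phi; rewrite peval_pscale, RtoC_mult.
  transitivity (Cmul (Cmul (RtoC ((-1) ^ n * (-1) ^ n)) (RtoC (exp x * exp (- x))))
                  (Cmul (Cmul (cpow x (Copp a)) (cpow x a)) (peval p x))).
  - rewrite !RtoC_mult; ring.
  - rewrite cpow_opp_mul, <- Rpow_mult_distr, <- exp_plus.
    replace (-1 * -1) with 1 by ring; replace (x + - x) with 0 by ring.
    rewrite pow1, exp_0; ring.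
Qed.

Lemma is_pn_pn a n : is_pn a n (peval (pn a n)).
Proof.
  destruct (Aiter_phi_exists a n) as [h Hh]; exists h; split; [exact Hh |].
  intros x Hx; rewrite (Aiter_phi a n h Hh x Hx); symmetry; apply normalize_phi_poly.
Qed.

Lemma is_pn_eq a n P : is_pn a n P -> forall x, 0 < x -> P x = peval (pn a n) x.
Proof.
  intros [h [Hh HP]] x Hx; rewrite HP, (Aiter_phi a n h Hh x Hx) by exact Hx.
  apply normalize_phi_poly.
Qed.

Theorem mainTheorem2 (a : Cpx) (Ha : -1/2 < Cre a) :
  forall n : nat,
    (exists P, is_pn a n P) /\
    (exists Q, is_pn (Cadd a (RtoC 1)) n Q) /\
    (forall P, is_pn a n P -> exists P1 P2, cderiv P P1 /\ cderiv P1 P2) /\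
    (forall P Q P1 P2,
       is_pn a n P -> is_pn (Cadd a (RtoC 1)) n Q ->
       cderiv P P1 -> cderiv P1 P2 ->
       forall x, 0 < x ->
         Cmul (Cadd (Cmul (RtoC 2) a) (RtoC 1)) (Q x) =
         Cadd (Cadd (Cmul (RtoC (- x)) (P2 x))
                    (Cmul (Cadd (RtoC (2 * x - 1)) (Copp (Cmul (RtoC 2) a))) (P1 x)))
              (Cmul (Cadd (RtoC 1) (Cmul (RtoC 2) a)) (P x))).
Proof.
  intros n; split; [|split; [|split]].
  - eexists; apply is_pn_pn.
  - eexists; apply is_pn_pn.
  - intros P HP; exists (peval (pderiv (pn a n))), (peval (pderiv (pderiv (pn a n)))).
    split; [apply (cderiv_ext_pos _ _ _ (is_pn_eq a n P HP)) |];
      intros x _; apply cderiv_pt_lim_peval.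
  - intros P Q P1 P2 HP HQ HP1 HP2 x Hx.
    assert (E1 := cderiv_unique_pos _ _ _ _ (is_pn_eq a n P HP) HP1
                    (fun t _ => cderiv_pt_lim_peval (pn a n) t)).
    assert (E2 := cderiv_unique_pos _ _ _ _ E1 HP2
                    (fun t _ => cderiv_pt_lim_peval (pderiv (pn a n)) t) x Hx).
    rewrite E2, E1, (is_pn_eq a n P HP), (is_pn_eq _ n Q HQ), Rop_pn by exact Hx.
    unfold Rop; peval_simpl.
    destruct (peval (pn a n) x), (peval (pderiv (pn a n)) x),
      (peval (pderiv (pderiv (pn a n))) x), a.
    apply Cpx_ext; simpl; ring.
Qed.
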